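(* Let $B$ be a positive integer and let $\Psi=\forall X\in\mathbb R^n.\exists Y\in\mathbb R^m.\,(|X|>B\lor\Phi_0(X,Y))$ be a $\Pi_{2,<}$-sentence (so $\Phi_0$ is a $\mathrm{QFF}_<$-formula). Then $\Psi$ is true over $\mathbb R$ if and only if the sentence $\exists C\in\mathbb R.\forall X\in\mathbb R^n.\exists Y\in\mathbb R^m.\,(|X|>B\lor(|Y|\le C\land\Phi_0(X,Y)))$ is true over $\mathbb R$.
   Context: $\mathcal L$ is the first-order language over the signature $\langle \mathbb Z,+,\times,<,\le\rangle$ with connectives $\land,\lor$, interpreted over $\mathbb R$. A $\mathrm{QFF}_<$-formula is a quantifier-free $\mathcal L$-formula not containing $\le$. A $\Pi_{2,<}$-sentence has the form $\forall X.\exists Y.\,\chi(X,Y)$ with $\chi$ a $\mathrm{QFF}_<$-formula. For $X=(x_1,\dots,x_n)$ and a term $c$, $|X|\le c$ abbreviates $\bigwedge_j(-c\le x_j\le c)$ and $|X|>c$ abbreviates $\bigvee_j(x_j>c\lor x_j<-c)$. *)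

From Stdlib Require Import Reals ZArith.
Open Scope R_scope.

Definition fin (n : nat) : Type := {i : nat | (i < n)%nat}.

Inductive term (V : Type) : Type :=
| TVar : V -> term V
| TConst : Z -> term V
| TAdd : term V -> term V -> term V
| TMul : term V -> term V -> term V.
Arguments TVar {V} _.
Arguments TConst {V} _.
Arguments TAdd {V} _ _.
Arguments TMul {V} _ _.

Fixpoint teval {V : Type} (env : V -> R) (t : term V) : R :=
  match t with
  | TVar v => env v
  | TConst z => IZR z
  | TAdd a b => teval env a + teval env b
  | TMul a b => teval env a * teval env b
  end.

(* QFF_< formulas: quantifier-free, built from strict atoms t1 < t2
   with the connectives /\ and \/ only (no <=, no negation). *)
Inductive qff_lt (V : Type) : Type :=
| FLt : term V -> term V -> qff_lt V
| FAnd : qff_lt V -> qff_lt V -> qff_lt V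
| FOr : qff_lt V -> qff_lt V -> qff_lt V.
Arguments FLt {V} _ _.
Arguments FAnd {V} _ _.
Arguments FOr {V} _ _.

Fixpoint holds {V : Type} (env : V -> R) (f : qff_lt V) : Prop :=
  match f with
  | FLt a b => teval env a < teval env b
  | FAnd f g => holds env f /\ holds env g
  | FOr f g => holds env f \/ holds env g
  end.

Definition envXY {n m : nat} (X : fin n -> R) (Y : fin m -> R)
  (v : fin n + fin m) : R :=
  match v with inl i => X i | inr j => Y j end.

Definition norm_le {n : nat} (X : fin n -> R) (c : R) : Prop :=
  forall j : fin n, - c <= X j <= c.

Definition norm_gt {n : nat} (X : fin n -> R) (c : R) : Prop :=
  exists j : fin n, X j > c \/ X j < - c.

From Stdlib Require Import Reals ZArith.
From Stdlib Require Import Lra Lia Psatz Arith Classical FunctionalExtensionality.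
Open Scope R_scope.

(* For "->" the point is that a strict quantifier-free formula defines an
   open set, so a witness Y found for a point X also works, unchanged, for
   every X' close to X; any single witness is bounded.  Hence the property
   "some witness of norm <= C exists" holds with a LOCALLY uniform C on the
   box [-B,B]^n, and compactness of the box makes C globally uniform. *)

Lemma teval_lipschitz {V : Type} (t : term V) (env : V -> R) :
  exists K, 0 <= K /\ forall (env' : V -> R) (d : R), 0 <= d <= 1 ->
    (forall v, Rabs (env' v - env v) <= d) ->
    Rabs (teval env' t - teval env t) <= K * d.
Proof.
  induction t as [v | z | a [Ka [HKa IHa]] b [Kb [HKb IHb]]
                        | a [Ka [HKa IHa]] b [Kb [HKb IHb]]]; simpl.
  - exists 1; split; [lra |]. intros env' d _ Hd. specialize (Hd v). lra.
  - exists 0; split; [lra |]. intros env' d _ _.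
    unfold Rminus; rewrite Rplus_opp_r, Rabs_R0; lra.
  - exists (Ka + Kb); split; [lra |]. intros env' d Hd Hclose.
    specialize (IHa env' d Hd Hclose). specialize (IHb env' d Hd Hclose).
    replace (teval env' a + teval env' b - (teval env a + teval env b))
      with ((teval env' a - teval env a) + (teval env' b - teval env b)) by ring.
    pose proof (Rabs_triang (teval env' a - teval env a) (teval env' b - teval env b)).
    lra.
  - set (ta := teval env a); set (tb := teval env b).
    exists (Ka * Kb + Rabs ta * Kb + Ka * Rabs tb).
    pose proof (Rabs_pos ta); pose proof (Rabs_pos tb).
    split; [nra |]. intros env' d Hd Hclose.
    specialize (IHa env' d Hd Hclose). specialize (IHb env' d Hd Hclose).
    fold ta in IHa; fold tb in IHb.
    set (x := teval env' a - ta) in *; set (y := teval env' b - tb) in *.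
    replace (teval env' a * teval env' b - ta * tb) with (x * y + ta * y + x * tb)
      by (unfold x, y; ring).
    pose proof (Rabs_triang (x * y + ta * y) (x * tb)).
    pose proof (Rabs_triang (x * y) (ta * y)).
    rewrite !Rabs_mult in *.
    pose proof (Rabs_pos x); pose proof (Rabs_pos y).
    assert (Hxy : Rabs x * Rabs y <= (Ka * d) * (Kb * d))
      by (apply Rmult_le_compat; assumption).
    assert (Hd2 : (Ka * d) * (Kb * d) <= Ka * Kb * d).
    { replace ((Ka * d) * (Kb * d)) with ((Ka * Kb * d) * d) by ring.
      assert (0 <= Ka * Kb * d) by (apply Rmult_le_pos; [apply Rmult_le_pos |]; lra).
      nra. }
    assert (Rabs ta * Rabs y <= Rabs ta * (Kb * d)) by (apply Rmult_le_compat_l; lra).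
    assert (Rabs x * Rabs tb <= (Ka * d) * Rabs tb) by (apply Rmult_le_compat_r; lra).
    lra.
Qed.

Lemma Rabs_le_bounds (x b : R) : Rabs x <= b -> - b <= x <= b.
Proof.
  intros H. pose proof (Rle_abs x). pose proof (Rle_abs (- x)).
  rewrite Rabs_Ropp in *. lra.
Qed.

Lemma holds_open {V : Type} (f : qff_lt V) (env : V -> R) : holds env f ->
  exists d, 0 < d /\ forall env' : V -> R,
    (forall v, Rabs (env' v - env v) < d) -> holds env' f.
Proof.
  induction f as [a b | f IHf g IHg | f IHf g IHg]; simpl.
  - intros Hlt.
    destruct (teval_lipschitz a env) as [Ka [HKa Ha]].
    destruct (teval_lipschitz b env) as [Kb [HKb Hb]].
    set (gap := teval env b - teval env a).
    set (d := Rmin 1 (gap / (2 * (Ka + Kb + 1)))).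
    assert (Hd_pos : 0 < d) by (apply Rmin_glb_lt; [lra | unfold gap;
      apply Rdiv_lt_0_compat; lra]).
    assert (Hsmall : (Ka + Kb) * d < gap).
    { assert (Hd : d <= gap / (2 * (Ka + Kb + 1))) by apply Rmin_r.
      assert (Hsplit : gap / (2 * (Ka + Kb + 1)) * (2 * (Ka + Kb + 1)) = gap)
        by (field; lra).
      nra. }
    exists d; split; [exact Hd_pos |]. intros env' Hclose.
    assert (Hle : forall v, Rabs (env' v - env v) <= d)
      by (intro v; apply Rlt_le, Hclose).
    assert (Hd1 : 0 <= d <= 1) by (split; [lra | apply Rmin_l]).
    specialize (Ha env' d Hd1 Hle). specialize (Hb env' d Hd1 Hle).
    apply Rabs_le_bounds in Ha; apply Rabs_le_bounds in Hb.
    unfold gap in Hsmall. nra.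
  - intros [Hf Hg].
    destruct (IHf Hf) as [d1 [Hd1 H1]]. destruct (IHg Hg) as [d2 [Hd2 H2]].
    exists (Rmin d1 d2); split; [apply Rmin_glb_lt; lra |].
    intros env' Hclose. split.
    + apply H1. intro v. exact (Rlt_le_trans _ _ _ (Hclose v) (Rmin_l _ _)).
    + apply H2. intro v. exact (Rlt_le_trans _ _ _ (Hclose v) (Rmin_r _ _)).
  - intros [Hf | Hg].
    + destruct (IHf Hf) as [d [Hd H]]. exists d; auto.
    + destruct (IHg Hg) as [d [Hd H]]. exists d; auto.
Qed.

(* Vectors of R^n are handled as functions nat -> R when inducting on n. *)
Definition tofin (n : nat) (X : nat -> R) : fin n -> R := fun i => X (proj1_sig i).

Definition fromfin (n : nat) (X : fin n -> R) : nat -> R :=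
  fun i => match lt_dec i n with left h => X (exist _ i h) | right _ => 0 end.

Lemma fromfin_at (n : nat) (X : fin n -> R) (i : nat) (h : (i < n)%nat) :
  fromfin n X i = X (exist _ i h).
Proof.
  unfold fromfin. destruct (lt_dec i n) as [h' | h']; [| lia].
  do 2 f_equal. apply le_unique.
Qed.

Lemma tofin_fromfin (n : nat) (X : fin n -> R) : tofin n (fromfin n X) = X.
Proof.
  apply functional_extensionality. intros [i h]. apply fromfin_at.
Qed.

Lemma prefix_bounded (Y : nat -> R) (m : nat) :
  exists C, forall i, (i < m)%nat -> Rabs (Y i) <= C.
Proof.
  induction m as [| m [C HC]].
  - exists 0. intros i Hi; lia.
  - exists (Rmax C (Rabs (Y m))). intros i Hi.
    destruct (Nat.eq_dec i m) as [-> | Hne]; [apply Rmax_r |].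
    eapply Rle_trans; [apply HC; lia | apply Rmax_l].
Qed.

Lemma norm_le_exists (m : nat) (Y : fin m -> R) : exists C, norm_le Y C.
Proof.
  destruct (prefix_bounded (fromfin m Y) m) as [C HC].
  exists C. intros [j h]. apply Rabs_le_bounds.
  rewrite <- (fromfin_at m Y j h). apply HC, h.
Qed.

Lemma norm_le_mono {m : nat} (Y : fin m -> R) (C C' : R) :
  C <= C' -> norm_le Y C -> norm_le Y C'.
Proof. intros HCC HY j. specialize (HY j). lra. Qed.

(* The set of s up to which a uniform bound exists has a supremum s,
   and a neighbourhood of s pushes this set beyond s unless s = b. *)
Lemma interval_uniform (a b : R) (Q : R -> R -> Prop) : a <= b ->
  (forall t C C', C <= C' -> Q t C -> Q t C') ->
  (forall t, a <= t <= b ->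
     exists C d, 0 < d /\ forall t', Rabs (t' - t) < d -> Q t' C) ->
  exists C, forall t, a <= t <= b -> Q t C.
Proof.
  intros Hab Hmono Hlocal.
  set (E := fun s => a <= s <= b /\ exists C, forall t, a <= t <= s -> Q t C).
  assert (Ea : E a).
  { split; [lra |]. destruct (Hlocal a) as [C [d [Hd H]]]; [lra |].
    exists C. intros t Ht. apply H. replace (t - a) with 0 by lra.
    rewrite Rabs_R0; lra. }
  destruct (completeness E) as [s [Hub Hlub]].
  { exists b. intros x [Hx _]; lra. }
  { exists a; exact Ea. }
  assert (Has : a <= s) by (apply Hub, Ea).
  assert (Hsb : s <= b) by (apply Hlub; intros x [Hx _]; lra).
  destruct (Hlocal s) as [C0 [d [Hd H0]]]; [lra |].
  assert (Hnear : exists s1, E s1 /\ s - d < s1).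
  { apply NNPP. intro Hnone. assert (Hs : s <= s - d); [| lra].
    apply Hlub. intros x Ex. apply Rnot_lt_le. intro Hx. apply Hnone. eauto. }
  destruct Hnear as [s1 [[_ [C1 HC1]] Hs1]].
  set (s2 := Rmin b (s + d / 2)).
  assert (Es2 : E s2).
  { assert (s2 <= b /\ s2 <= s + d / 2) as [Hs2b Hs2d] by (split; [apply Rmin_l | apply Rmin_r]).
    split; [split; [apply Rmin_glb |]; lra |].
    exists (Rmax C0 C1). intros t Ht.
    destruct (Rle_dec t s1) as [Hts | Hts].
    - apply (Hmono _ C1); [apply Rmax_r | apply HC1; lra].
    - apply (Hmono _ C0); [apply Rmax_l | apply H0, Rabs_def1; lra]. }
  assert (Hs2b : s2 = b).
  { specialize (Hub _ Es2). unfold s2 in *. unfold Rmin in *.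
    destruct (Rle_dec b (s + d / 2)); lra. }
  destruct Es2 as [_ [C HC]]. exists C. intros t Ht. apply HC. lra.
Qed.

Definition in_box (n : nat) (B : R) (X : nat -> R) : Prop :=
  forall i, (i < n)%nat -> - B <= X i <= B.

Definition near (n : nat) (d : R) (X X' : nat -> R) : Prop :=
  forall i, (i < n)%nat -> Rabs (X' i - X i) < d.

Definition set_coord (n : nat) (Z : nat -> R) (t : R) : nat -> R :=
  fun i => if Nat.eqb i n then t else Z i.

Definition box_uniformizes (n : nat) (B : R) : Prop :=
  forall Q : (nat -> R) -> R -> Prop,
    (forall X C C', C <= C' -> Q X C -> Q X C') ->
    (forall X, in_box n B X ->
       exists C d, 0 < d /\ forall X', near n d X X' -> Q X' C) ->
    exists C, forall X, in_box n B X -> Q X C.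

(* The property
   "Q holds within distance 1/C of (Z, t0), with bound C" is monotone in C and
   locally uniform in Z, so compactness of [-B,B]^n yields a single C. *)
Lemma slab_uniform (B : R) (n : nat) (Q : (nat -> R) -> R -> Prop) :
  box_uniformizes n B ->
  (forall X C C', C <= C' -> Q X C -> Q X C') ->
  (forall X, in_box (S n) B X ->
     exists C d, 0 < d /\ forall X', near (S n) d X X' -> Q X' C) ->
  forall t0, - B <= t0 <= B ->
  exists C d, 0 < d /\ forall t, Rabs (t - t0) < d ->
    forall Z, in_box n B Z -> Q (set_coord n Z t) C.
Proof.
  intros Hbox Hmono Hlocal t0 Ht0.
  set (Q' := fun Z C => 1 <= C /\ forall X', near n (/ C) Z X' ->
               Rabs (X' n - t0) < / C -> Q X' C).
  destruct (Hbox Q') as [C1 HC1].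
  - intros Z C C' HCC [H1 H2]. split; [lra |]. intros X' Hnear Ht.
    assert (Hinv : / C' <= / C) by (apply Rinv_le_contravar; lra).
    apply (Hmono _ C); [lra |]. apply H2; [| lra].
    intros i Hi. specialize (Hnear i Hi). lra.
  - intros Z HZ.
    destruct (Hlocal (set_coord n Z t0)) as [C0 [d0 [Hd0 H0]]].
    { intros i Hi. unfold set_coord.
      destruct (Nat.eqb_spec i n); [lra | apply HZ; lia]. }
    set (C := Rmax 1 (Rmax C0 (2 / d0))).
    assert (HC1 : 1 <= C) by apply Rmax_l.
    assert (HC0 : C0 <= C) by (eapply Rle_trans; [apply Rmax_l | apply Rmax_r]).
    assert (HCd : 2 / d0 <= C) by (eapply Rle_trans; [apply Rmax_r | apply Rmax_r]).
    assert (HiC : / C <= d0 / 2).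
    { replace (d0 / 2) with (/ (2 / d0)) by (field; lra).
      apply Rinv_le_contravar; [apply Rdiv_lt_0_compat |]; lra. }
    exists C, (d0 / 2). split; [lra |]. intros Z' HZZ'.
    split; [exact HC1 |]. intros X' Hnear Ht.
    apply (Hmono _ C0); [exact HC0 |]. apply H0.
    intros i Hi. unfold set_coord.
    destruct (Nat.eqb_spec i n) as [-> | Hne]; [lra |].
    assert (Hin : (i < n)%nat) by lia.
    specialize (Hnear i Hin). specialize (HZZ' i Hin).
    replace (X' i - Z i) with ((X' i - Z' i) + (Z' i - Z i)) by ring.
    pose proof (Rabs_triang (X' i - Z' i) (Z' i - Z i)). lra.
  - assert (Hzero : in_box n B (fun _ => 0)) by (intros i Hi; lra).
    assert (H1 : 1 <= C1) by apply (HC1 _ Hzero).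
    exists C1, (/ C1). split; [apply Rinv_0_lt_compat; lra |].
    intros t Ht Z HZ. apply (HC1 Z HZ).
    + intros i Hi. unfold set_coord.
      destruct (Nat.eqb_spec i n); [lia |].
      unfold Rminus; rewrite Rplus_opp_r, Rabs_R0.
      apply Rinv_0_lt_compat; lra.
    + unfold set_coord. rewrite Nat.eqb_refl. exact Ht.
Qed.

Lemma box_uniform (B : R) (HB : 0 <= B) (n : nat) : box_uniformizes n B.
Proof.
  induction n as [| n IH]; intros Q Hmono Hlocal.
  - destruct (Hlocal (fun _ => 0)) as [C [d [Hd H]]]; [intros i Hi; lia |].
    exists C. intros X _. apply H. intros i Hi; lia.
  - destruct (interval_uniform (- B) B
      (fun t C => forall Z, in_box n B Z -> Q (set_coord n Z t) C))
      as [C HC].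
    + lra.
    + intros t C C' HCC H Z HZ. eauto.
    + exact (slab_uniform B n Q IH Hmono Hlocal).
    + exists C. intros X HX.
      replace X with (set_coord n X (X n)).
      * apply HC; [apply HX; lia |]. intros i Hi. apply HX; lia.
      * apply functional_extensionality. intro i. unfold set_coord.
        destruct (Nat.eqb_spec i n); subst; reflexivity.
Qed.

Lemma witness_stable {n m : nat} (Phi0 : qff_lt (fin n + fin m))
  (X : nat -> R) (Y : fin m -> R) :
  holds (envXY (tofin n X) Y) Phi0 ->
  exists d, 0 < d /\ forall X', near n d X X' -> holds (envXY (tofin n X') Y) Phi0.
Proof.
  intros Hholds. destruct (holds_open Phi0 _ Hholds) as [d [Hd Hopen]].
  exists d; split; [exact Hd |]. intros X' Hnear. apply Hopen.
  intros [[i h] | j]; simpl.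
  - apply Hnear, h.
  - unfold Rminus; rewrite Rplus_opp_r, Rabs_R0; exact Hd.
Qed.

Lemma not_norm_gt_in_box {n : nat} (X : fin n -> R) (B : R) :
  ~ norm_gt X B -> in_box n B (fromfin n X).
Proof.
  intros Hout i h. rewrite (fromfin_at n X i h).
  split; apply Rnot_lt_le; intro Hlt; apply Hout; exists (exist _ i h); lra.
Qed.

Theorem mainTheorem6 (B : nat) (HB : (0 < B)%nat) (n m : nat)
  (Phi0 : qff_lt (fin n + fin m)) :
  (forall X : fin n -> R, exists Y : fin m -> R,
      norm_gt X (INR B) \/ holds (envXY X Y) Phi0)
  <->
  (exists C : R, forall X : fin n -> R, exists Y : fin m -> R,
      norm_gt X (INR B) \/ (norm_le Y C /\ holds (envXY X Y) Phi0)).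
Proof.
  split.
  - intros Hwit.
    destruct (box_uniform (INR B) (pos_INR B) n
      (fun X C => exists Y, norm_le Y C /\ holds (envXY (tofin n X) Y) Phi0))
      as [C HC].
    + intros X C C' HCC [Y [HY Hholds]]. exists Y. split; [| exact Hholds].
      exact (norm_le_mono Y C C' HCC HY).
    + intros X Hbox. destruct (Hwit (tofin n X)) as [Y [[[i h] Hgt] | Hholds]].
      { specialize (Hbox i h). unfold tofin in Hgt; simpl in Hgt. lra. }
      destruct (witness_stable Phi0 X Y Hholds) as [d [Hd Hstable]].
      destruct (norm_le_exists m Y) as [C HY].
      exists C, d. split; [exact Hd |]. intros X' Hnear. exists Y. auto.
    + exists C. intros X. destruct (classic (norm_gt X (INR B))) as [Hgt | Hin].
      { exists (fun _ => 0). left; exact Hgt. }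
      destruct (HC _ (not_norm_gt_in_box X (INR B) Hin)) as [Y HY].
      rewrite tofin_fromfin in HY. exists Y. right; exact HY.
  - intros [C Hbounded] X. destruct (Hbounded X) as [Y [Hgt | [_ Hholds]]].
    all: exists Y; auto.
Qed.
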